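(* Let $\mathbf{u},\mathbf{v}\in\mathbb{R}^2$ be fixed linearly independent unit vectors, and let $D_1\subset\mathbb{R}^2$ be an open disc of radius $r_1$ centered at the origin. Let $\mathbf{f}=(f_1,f_2)$ be a vector field on $\mathbb{R}^2$ with $f_1,f_2\in C^2_c(D_1)$. Then the transverse V-line transform satisfies $\mathcal{T}\mathbf{f}\equiv 0$ on $\mathbb{R}^2$ if and only if $\operatorname{div}\mathbf{f}=\frac{\partial f_1}{\partial x_1}+\frac{\partial f_2}{\partial x_2}=0$.
   Context: For a function $h$ on $\mathbb{R}^2$ and a unit vector $\mathbf{u}$, the divergent beam transform is $\mathcal{X}_{\mathbf{u}}h(\mathbf{x})=\int_0^\infty h(\mathbf{x}+t\mathbf{u})\,dt$. For $\mathbf{x}=(x_1,x_2)$ set $\mathbf{x}^\perp=(-x_2,x_1)$. The transverse V-line transform of $\mathbf{f}$ (with respect to the fixed directions $\mathbf{u},\mathbf{v}$) is the function on $\mathbb{R}^2$ given by $\mathcal{T}\mathbf{f}=-\mathcal{X}_{\mathbf{u}}(\mathbf{f}\cdot\mathbf{u}^\perp)+\mathcal{X}_{\mathbf{v}}(\mathbf{f}\cdot\mathbf{v}^\perp)$, where $\cdot$ is the Euclidean dot product. *)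

From Stdlib Require Import Reals.
From Coquelicot Require Import Coquelicot.
Open Scope R_scope.

Definition pt := (R * R)%type.

Definition d1 (f : pt -> R) (x : pt) : R := Derive (fun t => f (t, snd x)) (fst x).
Definition d2 (f : pt -> R) (x : pt) : R := Derive (fun t => f (fst x, t)) (snd x).

Definition C1 (f : pt -> R) : Prop :=
  (forall x, continuous f x) /\
  (forall x, ex_derive (fun t => f (t, snd x)) (fst x)) /\
  (forall x, ex_derive (fun t => f (fst x, t)) (snd x)) /\
  (forall x, continuous (d1 f) x) /\ (forall x, continuous (d2 f) x).

Definition C2 (f : pt -> R) : Prop := C1 f /\ C1 (d1 f) /\ C1 (d2 f).

Definition eucl_norm (x : pt) : R := sqrt (fst x ^ 2 + snd x ^ 2).

(* supp f (closure of {f <> 0}) is a compact subset of the open disc D(0, r1):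
   equivalently, f vanishes outside some closed disc of radius r < r1 *)
Definition compact_support_in_disc (f : pt -> R) (r1 : R) : Prop :=
  exists r, 0 <= r < r1 /\ forall x, r < eucl_norm x -> f x = 0.

Definition Cc2 (f : pt -> R) (r1 : R) : Prop := C2 f /\ compact_support_in_disc f r1.

Definition dot (a b : pt) : R := fst a * fst b + snd a * snd b.
Definition perp (x : pt) : pt := (- snd x, fst x).

Definition beam (u : pt) (h : pt -> R) (x : pt) : R :=
  RInt_gen (fun t => h (fst x + t * fst u, snd x + t * snd u))
    (at_point 0) (Rbar_locally p_infty).

Definition TV (u v : pt) (f1 f2 : pt -> R) (x : pt) : R :=
  - beam u (fun y => dot (f1 y, f2 y) (perp u)) x
  + beam v (fun y => dot (f1 y, f2 y) (perp v)) x.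

Definition div_field (f1 f2 : pt -> R) (x : pt) : R := d1 f1 x + d2 f2 x.

(* Differentiate T f along u.  Since X_u h (x + s u) is the integral of h (x + t u) over
   t >= s, the u-derivative of X_u h is -h, while the u-derivative passes under X_v; and the
   fundamental theorem of calculus along v gives f.u^perp = - X_v (D_v (f.u^perp)).  Hence
   D_u (T f) = X_v (D_u (f.v^perp) - D_v (f.u^perp)) = - (u^perp.v) X_v (div f),
   where u^perp.v <> 0 by linear independence.
   If T f = 0 then X_v (div f) = 0, and div f = - D_v X_v (div f) = 0.  Conversely, if
   div f = 0 then T f is constant along every line of direction u, and it vanishes far out on
   such a line because f has compact support. *)

From Pilot Require Import Defs.
From Stdlib Require Import Reals Lra.
From Coquelicot Require Import Coquelicot.
(* Coquelicot also exports a [d1]; re-importing [Defs] gives back the partial derivatives. *)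
Import Defs.
Open Scope R_scope.

Definition shift (x w : pt) (s : R) : pt := (fst x + s * fst w, snd x + s * snd w).

Lemma shift0 (x w : pt) : shift x w 0 = x.
Proof. destruct x; unfold shift; simpl; f_equal; ring. Qed.

Lemma shift_shift (x w : pt) (s t : R) : shift (shift x w s) w t = shift x w (s + t).
Proof. unfold shift; simpl; f_equal; ring. Qed.

Lemma shift_comm (x u v : pt) (s t : R) :
  shift (shift x u s) v t = shift (shift x v t) u s.
Proof. unfold shift; simpl; f_equal; ring. Qed.

Lemma dot_shift (a x w : pt) (s : R) : dot a (shift x w s) = dot a x + s * dot a w.
Proof. unfold dot, shift; simpl; ring. Qed.

Lemma dot_perp_self (a : pt) : dot (perp a) a = 0.
Proof. unfold dot, perp; simpl; ring. Qed.

Lemma dot_perp_l (a b : pt) : dot (perp a) b = fst a * snd b - snd a * fst b.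
Proof. unfold dot, perp; simpl; ring. Qed.

Lemma dot_perp_antisym (a b : pt) : dot (perp a) b = - dot (perp b) a.
Proof. unfold dot, perp; simpl; ring. Qed.

Lemma unit_perp (a : pt) :
  fst a ^ 2 + snd a ^ 2 = 1 -> fst (perp a) ^ 2 + snd (perp a) ^ 2 = 1.
Proof. unfold perp; simpl; lra. Qed.

Lemma dot_unit_self (a : pt) : fst a ^ 2 + snd a ^ 2 = 1 -> dot a a = 1.
Proof. unfold dot. lra. Qed.

Lemma Rabs_dot_le_norm (a y : pt) :
  fst a ^ 2 + snd a ^ 2 = 1 -> Rabs (dot a y) <= eucl_norm y.
Proof.
  intros ha. unfold eucl_norm. rewrite <- sqrt_Rsqr_abs. apply sqrt_le_1_alt.
  assert (Lagrange : (fst a ^ 2 + snd a ^ 2) * (fst y ^ 2 + snd y ^ 2) - (dot a y)²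
                     = (fst a * snd y - snd a * fst y) ^ 2)
    by (unfold dot, Rsqr; ring).
  rewrite ha in Lagrange. pose proof (pow2_ge_0 (fst a * snd y - snd a * fst y)). lra.
Qed.

Lemma continuous_pair {U : UniformSpace} (a b : U -> R) (z : U) :
  continuous a z -> continuous b z -> continuous (fun z => (a z, b z) : pt) z.
Proof.
  intros Ha Hb. apply (continuous_comp_2 a b pair); auto.
  apply (continuous_ext (fun p => p)); [intros []; reflexivity | apply continuous_id].
Qed.

Lemma continuous_shift (x w : pt) (s : R) : continuous (shift x w) s.
Proof.
  apply continuous_pair; apply (ex_derive_continuous (fun s : R => _ + s * _)); auto_derive; auto.
Qed.

Lemma continuous_affine2 (c a b : R) (z : R * R) :
  continuous (fun z : R * R => c + fst z * a + snd z * b) z.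
Proof.
  destruct z as [s t].
  apply (continuous_plus (fun z : R * R => c + fst z * a) (fun z => snd z * b)).
  - apply (continuous_plus (fun _ => c) (fun z : R * R => fst z * a)).
    + apply continuous_const.
    + apply (continuous_mult (fun z : R * R => fst z) (fun _ => a));
        [apply continuous_fst | apply continuous_const].
  - apply (continuous_mult (fun z : R * R => snd z) (fun _ => b));
      [apply continuous_snd | apply continuous_const].
Qed.

Lemma continuous_shift2 (x u v : pt) (z : R * R) :
  continuous (fun z : R * R => shift (shift x u (fst z)) v (snd z)) z.
Proof. apply continuous_pair; apply continuous_affine2. Qed.

Lemma locally_lt_continuous (f : R -> R) (x c : R) :
  continuous f x -> c < f x -> locally x (fun t => c < f t).
Proof.
  intros Hf Hc. assert (He : 0 < f x - c) by lra.
  generalize (proj1 (filterlim_locally f (f x)) Hf (mkposreal _ He)).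
  apply filter_imp. intros t Ht. change (Rabs (f t - f x) < f x - c) in Ht.
  pose proof (Rle_abs (- (f t - f x))). rewrite Rabs_Ropp in *. lra.
Qed.

Lemma is_derive_eq0 (phi : R -> R) (s0 l : R) :
  (forall s, phi s = 0) -> is_derive phi s0 l -> l = 0.
Proof.
  intros H0 Hd. rewrite <- (is_derive_unique _ _ _ Hd), (Derive_ext phi (fun _ => 0) s0 H0).
  apply Derive_const.
Qed.

Lemma is_derive_0_eq (phi : R -> R) (a b : R) :
  (forall s, is_derive phi s 0) -> phi a = phi b.
Proof.
  intros Hd.
  destruct (MVT_cor4 phi (fun _ => 0) b (Rabs (a - b)) (fun c _ => Hd c) a (Rle_refl _))
    as [c [Hc _]].
  lra.
Qed.

Definition vanishes_outside (r : R) (g : pt -> R) : Prop :=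
  forall y, r < eucl_norm y -> g y = 0.

Lemma vanishes_outside_of_support (g : pt -> R) (r1 : R) :
  compact_support_in_disc g r1 -> vanishes_outside r1 g.
Proof. intros [r [[_ Hr] Hg] ] y Hy. apply Hg. lra. Qed.

Lemma vanishes_outside_d1 (r : R) (g : pt -> R) :
  vanishes_outside r g -> vanishes_outside r (d1 g).
Proof.
  intros Hg [y1 y2] Hy. unfold d1; simpl.
  rewrite (Derive_ext_loc _ (fun _ => 0)); [apply Derive_const |].
  assert (Hc : continuous (fun t => eucl_norm (t, y2)) y1).
  { apply continuous_sqrt_comp, (ex_derive_continuous (fun t => t ^ 2 + _)); auto_derive; auto. }
  generalize (locally_lt_continuous _ _ r Hc Hy). apply filter_imp. intros t Ht. apply Hg, Ht.
Qed.

Lemma vanishes_outside_d2 (r : R) (g : pt -> R) :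
  vanishes_outside r g -> vanishes_outside r (d2 g).
Proof.
  intros Hg [y1 y2] Hy. unfold d2; simpl.
  rewrite (Derive_ext_loc _ (fun _ => 0)); [apply Derive_const |].
  assert (Hc : continuous (fun t => eucl_norm (y1, t)) y2).
  { apply continuous_sqrt_comp, (ex_derive_continuous (fun t => _ + t ^ 2)); auto_derive; auto. }
  generalize (locally_lt_continuous _ _ r Hc Hy). apply filter_imp. intros t Ht. apply Hg, Ht.
Qed.

Definition vanishes_on_ray (g : pt -> R) (x w : pt) (M : R) : Prop :=
  forall t, M < t -> g (shift x w t) = 0.

Lemma vanishes_on_ray_le (g : pt -> R) (x w : pt) (M M' : R) :
  M <= M' -> vanishes_on_ray g x w M -> vanishes_on_ray g x w M'.
Proof. intros HM Hg t Ht. apply Hg. lra. Qed.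

(* For a unit vector [a], [|a.(x + t w)| >= t |a.w| - |a.x|], which exceeds [r] past this bound. *)
Definition ray_bound (r : R) (a x w : pt) : R := (r + Rabs (dot a x)) / Rabs (dot a w).

Lemma vanishes_outside_on_ray (r : R) (g : pt -> R) (a x w : pt) :
  vanishes_outside r g -> fst a ^ 2 + snd a ^ 2 = 1 -> dot a w <> 0 ->
  vanishes_on_ray g x w (ray_bound r a x w).
Proof.
  intros Hg ha haw t Ht. apply Hg.
  eapply Rlt_le_trans; [| apply (Rabs_dot_le_norm a); exact ha].
  unfold ray_bound in Ht. rewrite dot_shift. set (c := dot a x) in *. set (k := dot a w) in *.
  assert (Hk : 0 < Rabs k) by (apply Rabs_pos_lt; exact haw).
  apply (proj1 (Rlt_div_l _ _ _ Hk)) in Ht.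
  assert (t * Rabs k <= Rabs (t * k))
    by (rewrite Rabs_mult; apply Rmult_le_compat_r; [lra | apply Rle_abs]).
  pose proof (Rabs_triang_inv (t * k) (- c)) as Htri.
  rewrite Rabs_Ropp in Htri. replace (t * k - - c) with (c + t * k) in Htri by ring.
  lra.
Qed.

Lemma vanishes_outside_on_own_ray (r : R) (g : pt -> R) (w x : pt) :
  vanishes_outside r g -> fst w ^ 2 + snd w ^ 2 = 1 -> vanishes_on_ray g x w (ray_bound r w x w).
Proof.
  intros Hg hw. apply vanishes_outside_on_ray; auto.
  rewrite dot_unit_self by exact hw. lra.
Qed.

Lemma ray_bound_perp_shift (r : R) (a x w : pt) (s : R) :
  ray_bound r (perp a) (shift x a s) w = ray_bound r (perp a) x w.
Proof. unfold ray_bound. rewrite dot_shift, dot_perp_self, Rmult_0_r, Rplus_0_r. reflexivity. Qed.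

Lemma ex_RInt_ray (g : pt -> R) (x w : pt) (a b : R) :
  (forall z, continuous g z) -> ex_RInt (fun t => g (shift x w t)) a b.
Proof.
  intros Hg. apply (@ex_RInt_continuous R_CompleteNormedModule). intros t _.
  apply (continuous_comp (shift x w) g); [apply continuous_shift | apply Hg].
Qed.

Lemma beam_RInt (g : pt -> R) (x w : pt) (M : R) :
  (forall z, continuous g z) -> 0 <= M -> vanishes_on_ray g x w M ->
  beam w g x = RInt (fun t => g (shift x w t)) 0 M.
Proof.
  intros Hg HM Hray. set (F := fun t => g (shift x w t)).
  apply is_RInt_gen_unique.
  intros P HP. apply Filter_prod with (fun a => a = 0) (fun b => M < b).
  - reflexivity.
  - exists M. intros t Ht. exact Ht.
  - intros a b -> Hb. exists (RInt F 0 M). split; [| exact (locally_singleton _ _ HP)].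
    replace (RInt F 0 M) with (RInt F 0 b).
    + apply RInt_correct, ex_RInt_ray, Hg.
    + rewrite <- (RInt_Chasles F 0 M b) by (apply ex_RInt_ray; exact Hg).
      rewrite (RInt_ext F (fun _ => 0) M b), RInt_const.
      * unfold scal, plus; simpl; unfold mult; simpl. ring.
      * intros t Ht. rewrite Rmin_left in Ht by lra. apply Hray. lra.
Qed.

Lemma beam_eq0 (g : pt -> R) (x w : pt) :
  (forall z, continuous g z) -> vanishes_on_ray g x w 0 -> beam w g x = 0.
Proof.
  intros Hg Hray. rewrite (beam_RInt g x w 0 Hg (Rle_refl 0) Hray).
  apply (RInt_point (V := R_CompleteNormedModule)).
Qed.

Lemma beam_lincomb (g h k : pt -> R) (x w : pt) (M a b : R) :
  (forall z, continuous g z) -> (forall z, continuous h z) ->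
  vanishes_on_ray g x w M -> vanishes_on_ray h x w M ->
  (forall y, k y = a * g y + b * h y) ->
  beam w k x = a * beam w g x + b * beam w h x.
Proof.
  intros Hg Hh Hgray Hhray Hk. set (M' := Rmax 0 M).
  assert (HM : M <= M') by apply Rmax_r.
  assert (HM' : 0 <= M') by apply Rmax_l.
  assert (Hkc : forall z, continuous k z).
  { intros z. apply (continuous_ext (fun y => plus (scal a (g y)) (scal b (h y)))).
    - intros y. symmetry. apply Hk.
    - apply (continuous_plus (fun y => scal a (g y)) (fun y => scal b (h y)));
        [apply (continuous_scal_r a g) | apply (continuous_scal_r b h)]; auto. }
  rewrite !(beam_RInt _ x w M'); auto;
    try (apply (vanishes_on_ray_le _ _ _ M); auto).
  - rewrite (RInt_ext _ (fun t => plus (scal a (g (shift x w t))) (scal b (h (shift x w t)))))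
      by (intros t _; apply Hk).
    apply is_RInt_unique.
    apply (is_RInt_plus (V := R_NormedModule) (fun t => scal a (g (shift x w t)))
                                              (fun t => scal b (h (shift x w t))));
      apply (is_RInt_scal (V := R_NormedModule)), (RInt_correct (V := R_CompleteNormedModule)),
        ex_RInt_ray; assumption.
  - intros t Ht. rewrite Hk, Hgray, Hhray by lra. ring.
Qed.

Lemma beam_derivative (g G : pt -> R) (x w : pt) (M : R) :
  (forall z, continuous G z) ->
  (forall s, is_derive (fun s => g (shift x w s)) s (G (shift x w s))) ->
  vanishes_on_ray g x w M -> vanishes_on_ray G x w M ->
  beam w G x = - g x.
Proof.
  intros HG Hd Hgray HGray. set (M' := Rmax 0 M + 1).
  assert (HM : M < M') by (pose proof (Rmax_r 0 M); unfold M'; lra).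
  assert (HM' : 0 <= M') by (pose proof (Rmax_l 0 M); unfold M'; lra).
  rewrite (beam_RInt G x w M') by (auto; apply (vanishes_on_ray_le _ _ _ M); auto; lra).
  rewrite (RInt_ext _ (Derive (fun s => g (shift x w s))))
    by (intros t _; symmetry; apply is_derive_unique, Hd).
  rewrite RInt_Derive.
  - rewrite (Hgray M' HM), shift0. ring.
  - intros t _. eexists. apply Hd.
  - intros t _. apply (continuous_ext (fun s => G (shift x w s))).
    + intros s. symmetry. apply is_derive_unique, Hd.
    + apply (continuous_comp (shift x w) G); [apply continuous_shift | apply HG].
Qed.

Lemma is_derive_beam_along (g : pt -> R) (x w : pt) (M s0 : R) :
  (forall z, continuous g z) -> vanishes_on_ray g x w M ->
  is_derive (fun s => beam w g (shift x w s)) s0 (- g (shift x w s0)).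
Proof.
  intros Hg Hray. set (F := fun t => g (shift x w t)). set (N := Rmax M (s0 + 1)).
  assert (HMN : M <= N) by apply Rmax_l.
  assert (HsN : s0 + 1 <= N) by apply Rmax_r.
  apply is_derive_ext_loc with (f := fun s => RInt F s N).
  - exists (mkposreal 1 Rlt_0_1). intros s Hs. change (Rabs (s - s0) < 1) in Hs.
    pose proof (Rle_abs (s - s0)).
    symmetry. rewrite (beam_RInt g (shift x w s) w (N - s)); auto; [| lra |].
    + replace (RInt F s N) with (RInt F (1 * 0 + s) (1 * (N - s) + s)) by (f_equal; ring).
      rewrite <- RInt_comp_lin by (apply ex_RInt_ray, Hg).
      apply RInt_ext. intros t _. unfold F, scal; simpl; unfold mult; simpl.
      rewrite shift_shift. replace (1 * t + s) with (s + t) by ring. ring.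
    + intros t Ht. rewrite shift_shift. apply Hray. lra.
  - apply (is_derive_RInt' F (fun a => RInt F a N) s0 N).
    + apply filter_forall. intros a.
      apply (RInt_correct (V := R_CompleteNormedModule)), ex_RInt_ray, Hg.
    + apply (continuous_comp (shift x w) g); [apply continuous_shift | apply Hg].
Qed.

Lemma is_derive_beam_across (g G : pt -> R) (x u v : pt) (M s0 : R) :
  (forall z, continuous g z) -> (forall z, continuous G z) ->
  (forall y s, is_derive (fun s => g (shift y u s)) s (G (shift y u s))) ->
  (forall s, vanishes_on_ray g (shift x u s) v M) ->
  is_derive (fun s => beam v g (shift x u s)) s0 (beam v G (shift x u s0)).
Proof.
  intros Hg HG Hd Hray. set (M' := Rmax 0 M).
  assert (HM : M <= M') by apply Rmax_r.
  assert (HM' : 0 <= M') by apply Rmax_l.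
  set (f := fun s t => g (shift (shift x u s) v t)).
  assert (Hf : forall s t, is_derive (fun z => f z t) s (G (shift (shift x u s) v t))).
  { intros s t. unfold f. rewrite shift_comm.
    apply (is_derive_ext (fun z => g (shift (shift x v t) u z))); [| apply Hd].
    intros z. rewrite shift_comm. reflexivity. }
  assert (HGray : vanishes_on_ray G (shift x u s0) v M).
  { intros t Ht. apply (is_derive_eq0 (fun z => f z t) s0); [| apply Hf].
    intros z. apply Hray, Ht. }
  apply (is_derive_ext (fun s => RInt (fun t => f s t) 0 M')).
  { intros s. symmetry. apply beam_RInt; auto. apply (vanishes_on_ray_le _ _ _ M); auto. }
  rewrite (beam_RInt G _ v M') by (auto; apply (vanishes_on_ray_le _ _ _ M); auto).
  replace (RInt (fun t => G (shift (shift x u s0) v t)) 0 M')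
    with (RInt (fun t => Derive (fun z => f z t) s0) 0 M')
    by (apply RInt_ext; intros t _; apply is_derive_unique, Hf).
  apply is_derive_RInt_param.
  - apply filter_forall. intros s t _. eexists. apply Hf.
  - intros t _. apply continuity_2d_pt_filterlim. simpl.
    replace (Derive (fun z : R => f z t) s0) with (G (shift (shift x u s0) v t))
      by (symmetry; apply is_derive_unique, Hf).
    apply (filterlim_ext (fun z => G (shift (shift x u (fst z)) v (snd z)))).
    + intros z. symmetry. apply is_derive_unique, Hf.
    + apply (continuous_comp (fun z : R * R => shift (shift x u (fst z)) v (snd z)) G).
      * apply continuous_shift2.
      * apply HG.
  - apply filter_forall. intros s. apply ex_RInt_ray, Hg.
Qed.

Lemma C1_continuous (g : pt -> R) (y : pt) : C1 g -> continuous g y.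
Proof. intros [Hc _]. apply Hc. Qed.

Definition dderiv (w : pt) (g : pt -> R) (y : pt) : R := fst w * d1 g y + snd w * d2 g y.

Lemma is_derive_dderiv (g : pt -> R) (x w : pt) (s : R) :
  C1 g -> is_derive (fun s => g (shift x w s)) s (dderiv w g (shift x w s)).
Proof.
  intros [_ [Hd1 [Hd2 [Hc1 _]]]].
  set (y := shift x w s). set (G := fun a b => g (a, b)).
  assert (Hdiff : differentiable_pt_lim G (fst y) (snd y) (d1 g y) (d2 g y)).
  { apply filterdiff_differentiable_pt_lim.
    eapply filterdiff_ext_lin.
    - apply (is_derive_filterdiff G (fst y) (snd y) (fun a b => d1 g (a, b)) (d2 g y)).
      + apply filter_forall. intros z. apply Derive_correct, (Hd1 z).
      + destruct y as [y1 y2]. apply Derive_correct, (Hd2 (y1, y2)).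
      + apply (Hc1 (fst y, snd y)).
    - intros z. reflexivity. }
  apply is_derive_Reals. unfold dderiv.
  replace (fst w * d1 g y + snd w * d2 g y) with (d1 g y * fst w + d2 g y * snd w) by ring.
  apply (derivable_pt_lim_comp_2d G (fun s => fst x + s * fst w) (fun s => snd x + s * snd w));
    [exact Hdiff | |]; apply is_derive_Reals; auto_derive; auto; ring.
Qed.

Lemma continuous_dderiv (g : pt -> R) (w y : pt) : C1 g -> continuous (dderiv w g) y.
Proof.
  intros [_ [_ [_ [Hc1 Hc2]]]].
  apply (continuous_plus (fun y => scal (fst w) (d1 g y)) (fun y => scal (snd w) (d2 g y)));
    [apply (continuous_scal_r (fst w) (d1 g)) | apply (continuous_scal_r (snd w) (d2 g))]; auto.
Qed.

Lemma vanishes_outside_dderiv (r : R) (g : pt -> R) (w : pt) :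
  vanishes_outside r g -> vanishes_outside r (dderiv w g).
Proof.
  intros Hg y Hy. unfold dderiv.
  rewrite (vanishes_outside_d1 r g Hg y Hy), (vanishes_outside_d2 r g Hg y Hy). ring.
Qed.

Lemma continuous_div_field (f1 f2 : pt -> R) (y : pt) :
  C1 f1 -> C1 f2 -> continuous (div_field f1 f2) y.
Proof.
  intros [_ [_ [_ [Hc1 _]]]] [_ [_ [_ [_ Hc2]]]].
  exact (continuous_plus (d1 f1) (d2 f2) y (Hc1 y) (Hc2 y)).
Qed.

Lemma vanishes_outside_div_field (r : R) (f1 f2 : pt -> R) :
  vanishes_outside r f1 -> vanishes_outside r f2 -> vanishes_outside r (div_field f1 f2).
Proof.
  intros H1 H2 y Hy. unfold div_field.
  rewrite (vanishes_outside_d1 r f1 H1 y Hy), (vanishes_outside_d2 r f2 H2 y Hy). ring.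
Qed.

Definition field_perp (f1 f2 : pt -> R) (a : pt) (y : pt) : R := dot (f1 y, f2 y) (perp a).

Lemma TV_field_perp (u v : pt) (f1 f2 : pt -> R) (x : pt) :
  TV u v f1 f2 x = - beam u (field_perp f1 f2 u) x + beam v (field_perp f1 f2 v) x.
Proof. reflexivity. Qed.

Lemma field_perp_eq (f1 f2 : pt -> R) (a y : pt) :
  field_perp f1 f2 a y = - snd a * f1 y + fst a * f2 y.
Proof. unfold field_perp, dot, perp; simpl; ring. Qed.

Lemma continuous_field_perp (f1 f2 : pt -> R) (a y : pt) :
  (forall z, continuous f1 z) -> (forall z, continuous f2 z) ->
  continuous (field_perp f1 f2 a) y.
Proof.
  intros H1 H2.
  apply (continuous_ext (fun y => plus (scal (- snd a) (f1 y)) (scal (fst a) (f2 y)))).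
  - intros z. symmetry. apply field_perp_eq.
  - apply (continuous_plus (fun y => scal (- snd a) (f1 y)) (fun y => scal (fst a) (f2 y)));
      [apply (continuous_scal_r (- snd a) f1) | apply (continuous_scal_r (fst a) f2)]; auto.
Qed.

Lemma vanishes_outside_field_perp (r : R) (f1 f2 : pt -> R) (a : pt) :
  vanishes_outside r f1 -> vanishes_outside r f2 -> vanishes_outside r (field_perp f1 f2 a).
Proof. intros H1 H2 y Hy. rewrite field_perp_eq, (H1 y Hy), (H2 y Hy). ring. Qed.

Lemma is_derive_field_perp (f1 f2 : pt -> R) (a x w : pt) (s : R) :
  C1 f1 -> C1 f2 ->
  is_derive (fun s => field_perp f1 f2 a (shift x w s)) s
    (field_perp (dderiv w f1) (dderiv w f2) a (shift x w s)).
Proof.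
  intros H1 H2.
  apply (is_derive_ext (fun s => - snd a * f1 (shift x w s) + fst a * f2 (shift x w s))).
  { intros t. symmetry. apply field_perp_eq. }
  rewrite field_perp_eq.
  apply (is_derive_plus (fun s => - snd a * f1 (shift x w s)) (fun s => fst a * f2 (shift x w s)));
    apply is_derive_scal; apply is_derive_dderiv; assumption.
Qed.

Lemma field_perp_dderiv_div (f1 f2 : pt -> R) (u v y : pt) :
  field_perp (dderiv u f1) (dderiv u f2) v y
  = field_perp (dderiv v f1) (dderiv v f2) u y - dot (perp u) v * div_field f1 f2 y.
Proof. rewrite !field_perp_eq. unfold dderiv, div_field, dot, perp; simpl. ring. Qed.

Section TransverseVLine.

Variables (u v : pt) (f1 f2 : pt -> R) (r : R).
Hypothesis hu : fst u ^ 2 + snd u ^ 2 = 1.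
Hypothesis hv : fst v ^ 2 + snd v ^ 2 = 1.
Hypothesis huv : dot (perp u) v <> 0.
Hypothesis C1f1 : C1 f1.
Hypothesis C1f2 : C1 f2.
Hypothesis Vf1 : vanishes_outside r f1.
Hypothesis Vf2 : vanishes_outside r f2.

Local Hint Resolve C1_continuous continuous_dderiv continuous_field_perp continuous_div_field
  vanishes_outside_dderiv vanishes_outside_field_perp vanishes_outside_div_field unit_perp : core.

Lemma vanishes_on_v_ray (g : pt -> R) (y : pt) :
  vanishes_outside r g -> vanishes_on_ray g y v (ray_bound r (perp u) y v).
Proof. intros Hg. apply vanishes_outside_on_ray; auto. Qed.

Lemma vanishes_on_v_rays (g : pt -> R) (x : pt) (s : R) :
  vanishes_outside r g -> vanishes_on_ray g (shift x u s) v (ray_bound r (perp u) x v).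
Proof. intros Hg. rewrite <- (ray_bound_perp_shift r u x v s). apply vanishes_on_v_ray, Hg. Qed.

Lemma beam_dderiv_u_field_perp (y : pt) :
  beam v (field_perp (dderiv u f1) (dderiv u f2) v) y
  = - field_perp f1 f2 u y - dot (perp u) v * beam v (div_field f1 f2) y.
Proof.
  set (M := ray_bound r (perp u) y v).
  assert (FTC : beam v (field_perp (dderiv v f1) (dderiv v f2) u) y = - field_perp f1 f2 u y).
  { apply (beam_derivative _ _ y v M); auto.
    - intros s. apply is_derive_field_perp; assumption.
    - apply vanishes_on_v_ray; auto.
    - apply vanishes_on_v_ray; auto. }
  rewrite <- FTC.
  replace (beam v _ y - _) with (1 * beam v (field_perp (dderiv v f1) (dderiv v f2) u) y
                                  + - dot (perp u) v * beam v (div_field f1 f2) y) by ring.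
  apply (beam_lincomb _ _ _ y v M); auto.
  - apply vanishes_on_v_ray; auto.
  - apply vanishes_on_v_ray; auto.
  - intros z. rewrite field_perp_dderiv_div. ring.
Qed.

Lemma is_derive_TV_shift (x : pt) (s0 : R) :
  is_derive (fun s => TV u v f1 f2 (shift x u s)) s0
    (- dot (perp u) v * beam v (div_field f1 f2) (shift x u s0)).
Proof.
  assert (Hu : is_derive (fun s => beam u (field_perp f1 f2 u) (shift x u s)) s0
                 (- field_perp f1 f2 u (shift x u s0))).
  { apply (is_derive_beam_along _ x u (ray_bound r u x u)); auto.
    apply vanishes_outside_on_own_ray; auto. }
  assert (Hv : is_derive (fun s => beam v (field_perp f1 f2 v) (shift x u s)) s0
                 (beam v (field_perp (dderiv u f1) (dderiv u f2) v) (shift x u s0))).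
  { apply (is_derive_beam_across _ _ x u v (ray_bound r (perp u) x v)); auto.
    - intros y s. apply is_derive_field_perp; assumption.
    - intros s. apply vanishes_on_v_rays; auto. }
  rewrite beam_dderiv_u_field_perp in Hv.
  apply (is_derive_ext (fun s => plus (opp (beam u (field_perp f1 f2 u) (shift x u s)))
                                      (beam v (field_perp f1 f2 v) (shift x u s)))).
  { intros s. reflexivity. }
  replace (- dot (perp u) v * beam v (div_field f1 f2) (shift x u s0))
    with (plus (opp (- field_perp f1 f2 u (shift x u s0)))
               (- field_perp f1 f2 u (shift x u s0)
                - dot (perp u) v * beam v (div_field f1 f2) (shift x u s0)))
    by (unfold plus, opp; simpl; ring).
  exact (is_derive_plus _ _ _ _ _ (is_derive_opp _ _ _ Hu) Hv).
Qed.

Lemma TV_shift_far (x : pt) : exists S, TV u v f1 f2 (shift x u S) = 0.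
Proof.
  set (Su := ray_bound r u x u). set (Sv := ray_bound r (perp v) x u).
  set (S := Rmax Su Sv + 1). exists S.
  assert (HSu : Su < S) by (pose proof (Rmax_l Su Sv); unfold S; lra).
  assert (HSv : Sv < S) by (pose proof (Rmax_r Su Sv); unfold S; lra).
  assert (Hbu : beam u (field_perp f1 f2 u) (shift x u S) = 0).
  { apply beam_eq0; auto. intros t Ht. rewrite shift_shift.
    apply (vanishes_outside_on_own_ray r); auto. fold Su. lra. }
  assert (Hbv : beam v (field_perp f1 f2 v) (shift x u S) = 0).
  { apply beam_eq0; auto. intros t Ht. rewrite shift_comm.
    apply (vanishes_outside_on_ray r _ (perp v)); auto.
    - rewrite dot_perp_antisym. lra.
    - rewrite ray_bound_perp_shift. exact HSv. }
  rewrite TV_field_perp, Hbu, Hbv. ring.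
Qed.

Lemma div_field_eq0_of_TV_eq0 :
  (forall x, TV u v f1 f2 x = 0) -> forall x, div_field f1 f2 x = 0.
Proof.
  intros HT.
  assert (Hbeam : forall y, beam v (div_field f1 f2) y = 0).
  { intros y.
    pose proof (is_derive_eq0 _ 0 _ (fun s => HT (shift y u s)) (is_derive_TV_shift y 0)) as E.
    rewrite shift0 in E. apply Rmult_integral in E as [E | E]; [lra | exact E]. }
  intros x.
  assert (Hd : is_derive (fun s => beam v (div_field f1 f2) (shift x v s)) 0
                 (- div_field f1 f2 (shift x v 0))).
  { apply (is_derive_beam_along _ x v (ray_bound r v x v)); auto.
    apply vanishes_outside_on_own_ray; auto. }
  pose proof (is_derive_eq0 _ 0 _ (fun s => Hbeam (shift x v s)) Hd) as E.
  rewrite shift0 in E. lra.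
Qed.

Lemma TV_eq0_of_div_field_eq0 :
  (forall x, div_field f1 f2 x = 0) -> forall x, TV u v f1 f2 x = 0.
Proof.
  intros Hdiv x.
  assert (Hbeam : forall y, beam v (div_field f1 f2) y = 0).
  { intros y. apply beam_eq0; auto. intros t _. apply Hdiv. }
  assert (Hconst : forall a b, TV u v f1 f2 (shift x u a) = TV u v f1 f2 (shift x u b)).
  { intros a b. apply (is_derive_0_eq (fun s => TV u v f1 f2 (shift x u s))). intros s.
    pose proof (is_derive_TV_shift x s) as Hd. rewrite Hbeam, Rmult_0_r in Hd. exact Hd. }
  destruct (TV_shift_far x) as [S HS].
  rewrite <- (shift0 x u), (Hconst 0 S). exact HS.
Qed.

End TransverseVLine.

Theorem theorem2 (u v : pt) (r1 : R) (f1 f2 : pt -> R)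
  (hu : fst u ^ 2 + snd u ^ 2 = 1) (hv : fst v ^ 2 + snd v ^ 2 = 1)
  (huv : fst u * snd v - snd u * fst v <> 0)
  (hr1 : 0 < r1)
  (hf1 : Cc2 f1 r1) (hf2 : Cc2 f2 r1) :
  (forall x : pt, TV u v f1 f2 x = 0) <-> (forall x : pt, div_field f1 f2 x = 0).
Proof.
  destruct hf1 as [[C1f1 _] S1], hf2 as [[C1f2 _] S2].
  rewrite <- dot_perp_l in huv.
  pose proof (vanishes_outside_of_support f1 r1 S1) as V1.
  pose proof (vanishes_outside_of_support f2 r1 S2) as V2.
  split.
  - exact (div_field_eq0_of_TV_eq0 u v f1 f2 r1 hu hv huv C1f1 C1f2 V1 V2).
  - exact (TV_eq0_of_div_field_eq0 u v f1 f2 r1 hu hv huv C1f1 C1f2 V1 V2).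
Qed.
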